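(* Let $\underline c=(c_1,\dots,c_k)$ and $\underline d=(d_1,\dots,d_k)$ be lists of positive integers. Arrange them in the array whose top row is $d_1,\dots,d_k$ (positions $1,\dots,k$) and whose bottom row is $1,c_1,\dots,c_k$ (positions $0,1,\dots,k$). An allowable path is a path in this array starting at the entry $1$ in which each step is a right move (same row, position $+1$), an up-right move (from bottom row position $j$ to top row position $j+1$), or a down move (from top row position $j$ to bottom row position $j$); its associated integer is the product of all entries encountered along the path. Let $E$ be the set of integers associated to allowable paths ending at $c_k$ and $F$ the set of integers associated to allowable paths ending at $d_k$. Then \[Y_{\underline c,\underline d}=\frac{\gcd(E)}{\gcd(E\cup F)}.\]
   Context: For positive integers $x,y$, $(x,y)$ denotes the gcd and $x\colon y=x/(x,y)$. For lists $\underline c=(c_1,\dots,c_k)$, $\underline d=(d_1,\dots,d_k)$ of positive integers define recursively $Y_0=1$ and $Y_j=\big((c_jY_{j-1})\colon d_j,\ c_j\big)$ (a gcd) for $1\le j\le k$, and set $Y_{\underline c,\underline d}=Y_k$. *)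

From mathcomp Require Import all_boot.
Set Implicit Arguments. Unset Strict Implicit. Unset Printing Implicit Defensive.

Definition colon (x y : nat) : nat := x %/ gcdn x y.

Fixpoint Yrec (Y : nat) (c d : seq nat) : nat :=
  match c, d with
  | cj :: c', dj :: d' => Yrec (gcdn (colon (cj * Y) dj) cj) c' d'
  | _, _ => Y
  end.
Definition Ycd (c d : seq nat) : nat := Yrec 1 c d.

(* The array: top row d_1..d_k at positions 1..k, bottom row 1,c_1..c_k
   at positions 0..k.  A state is (on_top, position). *)
Inductive move := MRight | MUpRight | MDown.

Definition entry (c d : seq nat) (top : bool) (j : nat) : nat :=
  if top then nth 1 d j.-1 else (if j is j'.+1 then nth 1 c j' else 1).

Definition valid_state (k : nat) (top : bool) (j : nat) : bool :=
  if top then (1 <= j <= k) else (j <= k).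

Definition step (k : nat) (s : bool * nat) (m : move) : option (bool * nat) :=
  let: (top, j) := s in
  match m with
  | MRight => if valid_state k top j.+1 then Some (top, j.+1) else None
  | MUpRight => if top then None else
                if valid_state k true j.+1 then Some (true, j.+1) else None
  | MDown => if top then Some (false, j) else None
  end.

(* Run a move sequence from state s; returns the final state and the
   product of the entries encountered after s (s itself excluded). *)
Fixpoint run (c d : seq nat) (k : nat) (s : bool * nat) (ms : seq move)
  : option ((bool * nat) * nat) :=
  match ms with
  | [::] => Some (s, 1)
  | m :: ms' =>
      match step k s m with
      | None => None
      | Some s' =>
          match run c d k s' ms' with
          | None => None
          | Some (f, p) => Some (f, entry c d s'.1 s'.2 * p)
          end
      end
  end.

Definition path_int (c d : seq nat) (ms : seq move) (f : bool * nat) (n : nat) : Prop :=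
  let k := size c in
  exists p, run c d k (false, 0) ms = Some (f, p) /\ n = entry c d false 0 * p.

Definition Eset (c d : seq nat) (n : nat) : Prop :=
  exists ms, path_int c d ms (false, size c) n.
Definition Fset (c d : seq nat) (n : nat) : Prop :=
  exists ms, path_int c d ms (true, size c) n.

Definition is_gcd_of (S : nat -> Prop) (g : nat) : Prop :=
  (forall x, S x -> g %| x) /\ (forall m, (forall x, S x -> m %| x) -> m %| g).

(* Let e_j and f_j be the gcds of the integers of the allowable paths ending
   at the bottom entry in position j and at the top entry d_j respectively
   (e_0 = 1 for the empty path, f_0 = 0 since no path ends there).  A path
   into d_(j+1) arrives from c_j or from d_j, and a path into c_(j+1) arrives
   from c_j or from d_(j+1), so
     f_(j+1) = d_(j+1) gcd(e_j, f_j),   e_(j+1) = c_(j+1) gcd(e_j, f_(j+1)).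
   Comparing p-adic valuations shows that e_j / gcd(e_j, f_j) obeys the
   recursion defining Y_j; for j = k this is gcd(E) / gcd(E u F). *)

From mathcomp Require Import all_boot zify.

Set Implicit Arguments.
Unset Strict Implicit.
Unset Printing Implicit Defensive.

Lemma mul_gcdn_colon (Y c d : nat) : 0 < Y -> 0 < c -> 0 < d ->
  gcdn Y d * c = gcdn (colon (c * Y) d) c * gcdn (gcdn Y d * c) d.
Proof.
move=> Y_gt0 c_gt0 d_gt0; rewrite /colon.
have cY_gt0 : 0 < c * Y by rewrite muln_gt0 c_gt0.
have gcdYd_gt0 : 0 < gcdn Y d by rewrite gcdn_gt0 Y_gt0.
have gcdcYd_gt0 : 0 < gcdn (c * Y) d by rewrite gcdn_gt0 cY_gt0.
have colon_gt0 : 0 < (c * Y) %/ gcdn (c * Y) d.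
  by rewrite divn_gt0 // dvdn_leq // dvdn_gcdl.
apply: eqn_from_log => [||p]; rewrite ?muln_gt0 ?gcdn_gt0 ?colon_gt0 ?d_gt0 ?orbT //.
rewrite !lognM ?gcdn_gt0 ?colon_gt0 ?d_gt0 ?orbT //.
rewrite !logn_gcd ?muln_gt0 ?colon_gt0 ?gcdYd_gt0 //.
rewrite logn_div ?dvdn_gcdl // !logn_gcd // !lognM // logn_gcd //; lia.
Qed.

Section GcdOfSets.

Implicit Types (S A B : nat -> Prop) (g a b w : nat).

Lemma eq_is_gcd_of S1 S2 g :
  (forall n, S1 n <-> S2 n) -> is_gcd_of S1 g -> is_gcd_of S2 g.
Proof.
move=> eqS [gS gmax]; split=> [n /eqS|m mS]; first exact: gS.
by apply: gmax => n /eqS; apply: mS.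
Qed.

Lemma is_gcd_of_unique S g1 g2 : is_gcd_of S g1 -> is_gcd_of S g2 -> g1 = g2.
Proof.
move=> [g1S g1max] [g2S g2max].
by apply/eqP; rewrite eqn_dvd g2max // g1max.
Qed.

Lemma is_gcd_of_union A B a b :
  is_gcd_of A a -> is_gcd_of B b -> is_gcd_of (fun n => A n \/ B n) (gcdn a b).
Proof.
move=> [aA amax] [bB bmax]; split=> [n [An | Bn] | m mAB].
- exact: dvdn_trans (dvdn_gcdl a b) (aA n An).
- exact: dvdn_trans (dvdn_gcdr a b) (bB n Bn).
by rewrite dvdn_gcd amax ?bmax //; move=> n n_in; apply: mAB; by [left | right].
Qed.

(* If m divides every p * w then so does lcm(m, w), whose cofactor
   lcm(m, w) / w must therefore divide every p. *)
Lemma is_gcd_of_scale S g w : 0 < w ->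
  is_gcd_of S g -> is_gcd_of (fun n => exists2 p, S p & n = p * w) (g * w).
Proof.
move=> w_gt0 [gS gmax]; split=> [_ [p Sp ->] | m mSw].
  exact: dvdn_mul (gS p Sp) (dvdnn w).
have w_lcm := dvdn_lcmr m w.
suff : lcmn m w %/ w %| g.
  rewrite -(dvdn_pmul2r w_gt0) divnK //; apply: dvdn_trans; exact: dvdn_lcml.
apply: gmax => p Sp; rewrite -(dvdn_pmul2r w_gt0) divnK //.
by rewrite dvdn_lcm (dvdn_mull p (dvdnn w)) andbT; apply: mSw; exists p.
Qed.

End GcdOfSets.

Section Reachability.

Variables c d : seq nat.
Local Notation k := (size c).

Definition reach (s : bool * nat) (n : nat) : Prop :=
  exists ms, run c d k (false, 0) ms = Some (s, n).

Lemma run_rcons s ms m :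
  run c d k s (rcons ms m) =
  if run c d k s ms is Some (f, p) then
    if step k f m is Some s' then Some (s', p * entry c d s'.1 s'.2) else None
  else None.
Proof.
elim: ms s => [|m0 ms IHms] s /=.
  by case: (step k s m) => // s'; rewrite muln1 mul1n.
case: (step k s m0) => // s0; rewrite IHms.
case: (run c d k s0 ms) => // [[f p]].
by case: (step k f m) => // s'; rewrite mulnA.
Qed.

Lemma reach_start : reach (false, 0) 1.
Proof. by exists [::]. Qed.

Lemma reach_step f p m s : reach f p -> step k f m = Some s ->
  reach s (p * entry c d s.1 s.2).
Proof.
by move=> [ms run_ms] step_m; exists (rcons ms m); rewrite run_rcons run_ms step_m.
Qed.

Lemma reach_last s n : reach s n ->
  s = (false, 0) \/
  exists f m p, [/\ reach f p, step k f m = Some s & n = p * entry c d s.1 s.2].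
Proof.
case=> ms; case/lastP: ms => [[<-] _|ms m]; first by left.
rewrite run_rcons; case run_ms: (run c d k (false, 0) ms) => [[f p]|] //.
case step_m: (step k f m) => [s'|] // [<- <-]; right.
by exists f, m, p; split => //; exists ms.
Qed.

Lemma reach_top0 n : ~ reach (true, 0) n.
Proof.
case/reach_last => [//|[[top j] [m [p [_ + _]]]]].
by case: top; case: m => /=; try case: ifP.
Qed.

Lemma reach_topS j n : j < k ->
  reach (true, j.+1) n <->
  exists2 p, reach (false, j) p \/ reach (true, j) p & n = p * nth 1 d j.
Proof.
move=> lt_jk; split.
  case/reach_last => [//|[[top i] [m [p [reach_p step_m ->]]]]].
  exists p => //; case: top step_m reach_p; case: m => //=; try case: ifP => // _.
  - by case=> ->; right.
  - by case=> ->; left.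
case=> p [reach_p | reach_p] ->.
- by apply: (@reach_step _ _ MUpRight _ reach_p) => /=; rewrite lt_jk.
- by apply: (@reach_step _ _ MRight _ reach_p) => /=; rewrite lt_jk.
Qed.

Lemma reach_botS j n : j < k ->
  reach (false, j.+1) n <->
  exists2 p, reach (false, j) p \/ reach (true, j.+1) p & n = p * nth 1 c j.
Proof.
move=> lt_jk; split.
  case/reach_last => [//|[[top i] [m [p [reach_p step_m ->]]]]].
  exists p => //; case: top step_m reach_p; case: m => //=; try case: ifP => // _.
  - by case=> ->; right.
  - by case=> ->; left.
case=> p [reach_p | reach_p] ->.
- by apply: (@reach_step _ _ MRight _ reach_p) => /=; rewrite lt_jk.
- exact: (@reach_step _ _ MDown _ reach_p).
Qed.

Lemma reach_endE b n : reach (b, k) n <-> exists ms, path_int c d ms (b, k) n.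
Proof.
split=> [[ms run_ms] | [ms [p [run_ms ->]]]]; exists ms; last by rewrite mul1n.
by exists n; rewrite mul1n.
Qed.

End Reachability.

Definition gcd_step (ef xy : nat * nat) : nat * nat :=
  let f := gcdn ef.1 ef.2 * xy.2 in (gcdn ef.1 f * xy.1, f).

Definition path_gcds (c d : seq nat) : nat * nat := foldl gcd_step (1, 0) (zip c d).

Lemma is_gcd_of_reach c d j :
  size c = size d -> all (fun x => 0 < x) c -> all (fun x => 0 < x) d ->
  j <= size c ->
  is_gcd_of (reach c d (false, j)) (path_gcds (take j c) (take j d)).1 /\
  is_gcd_of (reach c d (true, j)) (path_gcds (take j c) (take j d)).2.
Proof.
move=> eq_size c_gt0 d_gt0; elim: j => [_ | j IHj lt_jc].
  rewrite !take0; split; split=> [n reach_n | m m_reach].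
  - exact: dvd1n.
  - exact: m_reach (reach_start c d).
  - by case: (reach_top0 reach_n).
  - exact: dvdn0.
have lt_jd : j < size d by rewrite -eq_size.
have cj_gt0 : 0 < nth 1 c j by apply: (all_nthP 1 c_gt0).
have dj_gt0 : 0 < nth 1 d j by apply: (all_nthP 1 d_gt0).
have [gcd_bot gcd_top] := IHj (ltnW lt_jc).
rewrite /path_gcds (take_nth 1 lt_jc) (take_nth 1 lt_jd).
rewrite zip_rcons ?size_take ?eq_size // foldl_rcons /gcd_step /=.
have gcd_topS := eq_is_gcd_of (fun n => iff_sym (reach_topS d n lt_jc))
  (is_gcd_of_scale dj_gt0 (is_gcd_of_union gcd_bot gcd_top)).
split=> //; exact: eq_is_gcd_of (fun n => iff_sym (reach_botS d n lt_jc))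
  (is_gcd_of_scale cj_gt0 (is_gcd_of_union gcd_bot gcd_topS)).
Qed.

Lemma gcd_step_colon Y ef x y : 0 < Y -> 0 < x -> 0 < y ->
  ef.1 = Y * gcdn ef.1 ef.2 ->
  let ef' := gcd_step ef (x, y) in
  ef'.1 = gcdn (colon (x * Y) y) x * gcdn ef'.1 ef'.2.
Proof.
case: ef => e f /= Y_gt0 x_gt0 y_gt0 eq_e; rewrite /gcd_step /=.
set g := gcdn e f in eq_e *; clearbody g; subst e.
rewrite [g * y]mulnC -muln_gcdl mulnAC -muln_gcdl.
by rewrite {1}(mul_gcdn_colon Y_gt0 x_gt0 y_gt0) mulnA.
Qed.

Lemma foldl_gcd_step_Yrec Y ef c d :
  all (fun x => 0 < x) c -> all (fun x => 0 < x) d -> 0 < Y ->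
  ef.1 = Y * gcdn ef.1 ef.2 ->
  let ef' := foldl gcd_step ef (zip c d) in ef'.1 = Yrec Y c d * gcdn ef'.1 ef'.2.
Proof.
elim: c d Y ef => [|x c IHc] [|y d] //= Y ef /andP[x_gt0 c_gt0] /andP[y_gt0 d_gt0].
move=> Y_gt0 eq_e; apply: IHc => //; first by rewrite gcdn_gt0 x_gt0 orbT.
exact: gcd_step_colon.
Qed.

Lemma foldl_gcd_step_gt0 ef c d :
  0 < ef.1 -> all (fun x => 0 < x) c -> 0 < (foldl gcd_step ef (zip c d)).1.
Proof.
elim: c d ef => [|x c IHc] [|y d] ef //= e_gt0 /andP[x_gt0 c_gt0].
by apply: IHc; rewrite // muln_gt0 gcdn_gt0 e_gt0 x_gt0.
Qed.

Theorem proposition7p14 (c d : seq nat) :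
  size c = size d ->
  all (fun x => 0 < x) c -> all (fun x => 0 < x) d ->
  forall gE gEF : nat,
    is_gcd_of (Eset c d) gE ->
    is_gcd_of (fun n => Eset c d n \/ Fset c d n) gEF ->
    gEF %| gE /\ Ycd c d = gE %/ gEF.
Proof.
move=> eq_size c_gt0 d_gt0 gE gEF gcd_E gcd_EF.
have [gcd_bot gcd_top] := is_gcd_of_reach eq_size c_gt0 d_gt0 (leqnn (size c)).
have take_d : take (size c) d = d by rewrite eq_size take_size.
rewrite take_size take_d in gcd_bot gcd_top.
have gcd_E' := eq_is_gcd_of (@reach_endE c d false) gcd_bot.
have gcd_F' := eq_is_gcd_of (@reach_endE c d true) gcd_top.
rewrite (is_gcd_of_unique gcd_E gcd_E').
rewrite (is_gcd_of_unique gcd_EF (is_gcd_of_union gcd_E' gcd_F')).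
split; first exact: dvdn_gcdl.
have e_gt0 : 0 < (path_gcds c d).1 by apply: foldl_gcd_step_gt0.
have Ycd_e : (path_gcds c d).1 = Ycd c d * gcdn (path_gcds c d).1 (path_gcds c d).2.
  exact: foldl_gcd_step_Yrec.
by rewrite {1}Ycd_e mulnK // gcdn_gt0 e_gt0.
Qed.
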